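(* Let $r \ge 1$ and let $O, E, B \subseteq \mathbb{R}^r$ be axis-aligned bounding boxes. Then \[ \Bigl[\forall o' \in \mathrm{Corners}(O) : \mathrm{MaxDist}(o', E) < \mathrm{MinDist}(o', B)\Bigr] \iff \Bigl[\forall o \in O : \forall e \in E : \forall b \in B : \mathrm{dist}(o, e) < \mathrm{dist}(o, b)\Bigr]. \]
   Context: An axis-aligned bounding box (AABB) in $\mathbb{R}^r$ is a set $M = \prod_{d=1}^r [\check{M}_d, \hat{M}_d]$ with real numbers $\check{M}_d \le \hat{M}_d$ for each $d$; membership $p \in M$ means $\check{M}_d \le p_d \le \hat{M}_d$ for all $d$. $\mathrm{Corners}(M)$ is the set of the $2^r$ vertices of $M$, i.e. the points $c$ with $c_d \in \{\check{M}_d, \hat{M}_d\}$ for every $d$. $\mathrm{dist}$ is the Euclidean distance on $\mathbb{R}^r$. For a point $p$ and an AABB $M$, $\mathrm{MaxDist}(p, M) = \max_{q \in M} \mathrm{dist}(p, q)$ and $\mathrm{MinDist}(p, M) = \min_{q \in M} \mathrm{dist}(p, q)$. *)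

From HB Require Import structures.
From mathcomp Require Import all_boot all_order all_algebra.
From mathcomp Require Import boolp classical_sets reals.
Set Implicit Arguments. Unset Strict Implicit. Unset Printing Implicit Defensive.
Import Order.TTheory GRing.Theory Num.Theory.
Local Open Scope ring_scope.
Local Open Scope classical_set_scope.

Definition point (R : realType) (r : nat) := 'I_r -> R.

(* An axis-aligned bounding box given by lower corner lo and upper corner hi
   (with lo d <= hi d for every d, required as a hypothesis where used). *)
Record AABB (R : realType) (r : nat) := mkAABB { lo : 'I_r -> R ; hi : 'I_r -> R }.

Definition wf_box (R : realType) (r : nat) (M : AABB R r) : Prop :=
  forall d : 'I_r, lo M d <= hi M d.

Definition in_box (R : realType) (r : nat) (M : AABB R r) (p : 'I_r -> R) : Prop :=
  forall d : 'I_r, lo M d <= p d <= hi M d.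

Definition is_corner (R : realType) (r : nat) (M : AABB R r) (c : 'I_r -> R) : Prop :=
  forall d : 'I_r, c d = lo M d \/ c d = hi M d.

Definition dist (R : realType) (r : nat) (p q : 'I_r -> R) : R :=
  Num.sqrt (\sum_(d < r) (p d - q d) ^+ 2).

(* MaxDist(p, M) = max_{q in M} dist(p,q), MinDist(p, M) = min_{q in M} dist(p,q);
   for a (nonempty, compact) box these max/min are the sup/inf of the distance set. *)
Definition MaxDist (R : realType) (r : nat) (p : 'I_r -> R) (M : AABB R r) : R :=
  sup [set dist p q | q in in_box M].

Definition MinDist (R : realType) (r : nat) (p : 'I_r -> R) (M : AABB R r) : R :=
  inf [set dist p q | q in in_box M].

(* For a fixed point p, the distance to a point of a box is maximised by taking,
   in each coordinate, the endpoint farther from p, and minimised by clamping p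
   into the box; so MaxDist and MinDist are attained and the corner condition is
   a special case of the pointwise one.  Conversely, for fixed e and b the map
   o |-> |o - e|^2 - |o - b|^2 is affine in each coordinate, hence over O it is
   largest at the corner that moves towards b and away from e in every
   coordinate; at that corner the hypothesis makes it negative. *)
From HB Require Import structures.
From mathcomp Require Import all_boot all_order all_algebra.
From mathcomp Require Import boolp classical_sets reals.
From mathcomp Require Import lra.
Set Implicit Arguments. Unset Strict Implicit. Unset Printing Implicit Defensive.
Import Order.TTheory GRing.Theory Num.Theory.
Local Open Scope ring_scope.

Section BoxDistances.
Variables (R : realType) (r : nat).
Implicit Types (p q o e b c : 'I_r -> R) (M : AABB R r).

Definition sqdist p q : R := \sum_(d < r) (p d - q d) ^+ 2.

Lemma sqdist_ge0 p q : 0 <= sqdist p q.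
Proof. by apply: sumr_ge0 => d _; rewrite sqr_ge0. Qed.

Lemma ler_dist p q p' q' : (dist p q <= dist p' q') = (sqdist p q <= sqdist p' q').
Proof. exact/ler_sqrt/sqdist_ge0. Qed.

Lemma ltr_dist p q p' q' : (dist p q < dist p' q') = (sqdist p q < sqdist p' q').
Proof. by rewrite !ltNge ler_dist. Qed.

Definition farthest_point p M : 'I_r -> R :=
  fun d => if p d - lo M d <= hi M d - p d then hi M d else lo M d.

Definition nearest_point p M : 'I_r -> R :=
  fun d => if p d < lo M d then lo M d else if hi M d < p d then hi M d else p d.

Lemma corner_in_box M c : wf_box M -> is_corner M c -> in_box M c.
Proof. by move=> wM cM d; have := wM d; case: (cM d) => ->; rewrite lexx => ->. Qed.

Lemma farthest_point_corner p M : is_corner M (farthest_point p M).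
Proof. by move=> d; rewrite /farthest_point; case: ifP; [right | left]. Qed.

Lemma nearest_point_in_box p M : wf_box M -> in_box M (nearest_point p M).
Proof.
move=> wM d; have lo_hi := wM d; rewrite /nearest_point.
case: (ltP (p d) (lo M d)) => [_ | lo_p]; first by rewrite lexx lo_hi.
case: (ltP (hi M d) (p d)) => [_ | p_hi]; first by rewrite lexx lo_hi.
by rewrite lo_p p_hi.
Qed.

Lemma sqdist_le_farthest p M q : in_box M q -> sqdist p q <= sqdist p (farthest_point p M).
Proof.
move=> qM; apply: ler_sum => d _; have /andP[lo_q q_hi] := qM d.
by rewrite /farthest_point; case: (leP (p d - lo M d) (hi M d - p d)) => side; nra.
Qed.

Lemma sqdist_nearest_le p M q : in_box M q -> sqdist p (nearest_point p M) <= sqdist p q.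
Proof.
move=> qM; apply: ler_sum => d _; have /andP[lo_q q_hi] := qM d.
rewrite /nearest_point; case: (ltP (p d) (lo M d)) => p_lo; first by nra.
by case: (ltP (hi M d) (p d)) => hi_p; [nra | rewrite subrr expr0n sqr_ge0].
Qed.

Lemma MaxDist_farthest p M : wf_box M -> MaxDist p M = dist p (farthest_point p M).
Proof.
move=> wM; have farM := corner_in_box wM (farthest_point_corner p M).
have ub : ubound [set dist p q | q in in_box M] (dist p (farthest_point p M)).
  by move=> _ [q qM <-]; rewrite ler_dist sqdist_le_farthest.
apply/eqP; rewrite eq_le; apply/andP; split.
- by apply: ge_sup ub; exists (dist p (farthest_point p M)), (farthest_point p M).
- by apply: ub_le_sup; [exists (dist p (farthest_point p M)) | exists (farthest_point p M)].
Qed.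

Lemma MinDist_nearest p M : wf_box M -> MinDist p M = dist p (nearest_point p M).
Proof.
move=> wM; have nearM := nearest_point_in_box p wM.
have lb : lbound [set dist p q | q in in_box M] (dist p (nearest_point p M)).
  by move=> _ [q qM <-]; rewrite ler_dist sqdist_nearest_le.
apply/eqP; rewrite eq_le; apply/andP; split.
- by apply: ge_inf; [exists (dist p (nearest_point p M)) | exists (nearest_point p M)].
- by apply: lb_le_inf lb; exists (dist p (nearest_point p M)), (nearest_point p M).
Qed.

Definition corner_towards M e b : 'I_r -> R :=
  fun d => if e d <= b d then hi M d else lo M d.

Lemma corner_towards_corner M e b : is_corner M (corner_towards M e b).
Proof. by move=> d; rewrite /corner_towards; case: ifP; [right | left]. Qed.

(* (o - e)^2 - (o - b)^2 = 2 o (b - e) + e^2 - b^2 is affine in o. *)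
Lemma sqdist_subr_le_corner M o e b : in_box M o ->
  sqdist o e - sqdist o b <=
  sqdist (corner_towards M e b) e - sqdist (corner_towards M e b) b.
Proof.
move=> oM; rewrite /sqdist -!sumrB; apply: ler_sum => d _.
have /andP[lo_o o_hi] := oM d.
by rewrite /corner_towards; case: (leP (e d) (b d)) => e_b; nra.
Qed.

Lemma corner_sqdist_lt N P c e b : wf_box N -> wf_box P ->
  MaxDist c N < MinDist c P -> in_box N e -> in_box P b ->
  sqdist c e < sqdist c b.
Proof.
move=> wN wP; rewrite MaxDist_farthest // MinDist_nearest // ltr_dist => far_near eN bP.
apply: le_lt_trans (sqdist_le_farthest c eN) _.
exact: lt_le_trans far_near (sqdist_nearest_le c bP).
Qed.

End BoxDistances.

Theorem theorem4p1 (R : realType) (r : nat) (O E B : AABB R r) :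
  (0 < r)%N -> wf_box O -> wf_box E -> wf_box B ->
  ((forall o' : 'I_r -> R, is_corner O o' -> MaxDist o' E < MinDist o' B) <->
   (forall o e b : 'I_r -> R, in_box O o -> in_box E e -> in_box B b ->
      dist o e < dist o b)).
Proof.
move=> _ wO wE wB; split=> [corners o e b oO eE bB | points c cO].
- pose c := corner_towards O e b.
  have c_lt := corner_sqdist_lt wE wB (corners c (corner_towards_corner O e b)) eE bB.
  rewrite ltr_dist -subr_lt0; apply: le_lt_trans (sqdist_subr_le_corner e b oO) _.
  by rewrite subr_lt0.
- rewrite MaxDist_farthest // MinDist_nearest //.
  apply: points; first exact: corner_in_box.
    exact/corner_in_box/farthest_point_corner.
  exact: nearest_point_in_box.
Qed.
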